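(* Let $G$ be a graph, $\theta$ a real number, and let $u_1,\dots,u_k$ be distinct $\theta$-positive vertices of $G$. Then $\mathrm{mult}(\theta,G\setminus\{u_1,\dots,u_k\})$ is either equal to $\mathrm{mult}(\theta,G)+k$ or at most $\mathrm{mult}(\theta,G)+k-2$.
   Context: All graphs are finite and simple. For a graph $G$ on $n$ vertices, let $p(G,r)$ be the number of $r$-matchings of $G$ ($p(G,0)=1$); the matching polynomial is $\mu(G,x)=\sum_{r=0}^{\lfloor n/2\rfloor}(-1)^r p(G,r)x^{n-2r}$. For real $\theta$, $\mathrm{mult}(\theta,G)$ is the multiplicity of $\theta$ as a root of $\mu(G,x)$ (it is $0$ if $\theta$ is not a root). $G\setminus X$ denotes deletion of the vertex set $X$ and $G\setminus u=G\setminus\{u\}$. A vertex $u$ is $\theta$-positive in $G$ if $\mathrm{mult}(\theta,G\setminus u)=\mathrm{mult}(\theta,G)+1$. *)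

From HB Require Import structures.
From mathcomp Require Import all_boot all_order all_algebra.
Set Implicit Arguments. Unset Strict Implicit. Unset Printing Implicit Defensive.
Import Order.TTheory GRing.Theory Num.Theory.
Local Open Scope ring_scope.

(* A finite simple graph: vertex type T : finType with adjacency e : rel T,
   assumed symmetric and irreflexive in the theorem.  Induced subgraphs are
   represented by their vertex set S : {set T}; G itself is [set: T] and
   G \ X is ~: X. *)

Definition is_edge (T : finType) (e : rel T) (S : {set T}) (f : {set T}) : bool :=
  [exists x : T, exists y : T,
     [&& x \in S, y \in S, e x y & f == [set x; y]]].

Definition is_matching (T : finType) (e : rel T) (S : {set T})
    (M : {set {set T}}) : bool :=
  [forall f in M, is_edge e S f] &&
  [forall f in M, forall g in M, (f != g) ==> [disjoint f & g]].

Definition nmatch (T : finType) (e : rel T) (S : {set T}) (r : nat) : nat :=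
  #|[set M : {set {set T}} | is_matching e S M & #|M| == r]|.

Definition matchpoly (R : nzRingType) (T : finType) (e : rel T) (S : {set T})
    : {poly R} :=
  \sum_(r < (#|S| %/ 2).+1)
     ((-1) ^+ r * (nmatch e S r)%:R) *: 'X^(#|S| - 2 * r).

Definition mult (R : fieldType) (T : finType) (e : rel T) (theta : R)
    (S : {set T}) : nat :=
  mup theta (matchpoly R e S).

Definition theta_positive (R : fieldType) (T : finType) (e : rel T)
    (theta : R) (S : {set T}) (u : T) : bool :=
  mult e theta (S :\ u) == (mult e theta S).+1.

From HB Require Import structures.
From mathcomp Require Import all_boot all_order all_algebra zify.
Import Order.TTheory GRing.Theory Num.Theory.

(* Write mu(S) for the matching polynomial of the induced subgraph G[S] and
   mult(S) for the multiplicity of theta as a root of mu(S).  The theorem is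
   proved by induction on the deleted set W, adding two vertices u, v at a time.

   1. Matchings: mu(S) is a signed sum over the matchings of G[S]; splitting
      them according to a vertex v gives the recurrence
        mu(S) = x mu(S - v) - sum_(w ~ v) mu(S - v - w),
      and differentiating termwise gives mu(S)' = sum_(v in S) mu(S - v).
   2. Polynomials: a nonzero sum of squares vanishes at theta to even order,
      and adding one to q^2 never raises the order of q^2.
   3. Godsil's identity: mu(S - u) mu(S - v) - mu(S) mu(S - u - v) is a sum of
      squares.  Hence the Wronskian of mu(S) and mu(S - u) is mu(S - u)^2 plus a
      sum of squares, which gives interlacing |mult(S - u) - mult(S)| <= 1, and
      two theta-positive vertices u, v of G[S] never satisfy
      mult(S - u - v) = mult(S) + 1 (the identity would vanish to odd order).
   4. A counting step combines the induction hypotheses for H, H - u, H - v with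
      these facts to obtain the dichotomy for H - u - v. *)

Set Implicit Arguments.
Unset Strict Implicit.
Unset Printing Implicit Defensive.

Section Matchings.
Variables (T : finType) (e : rel T).
Hypothesis e_irr : irreflexive e.

Lemma is_edgeP (S : {set T}) f :
  reflect (exists x y, [/\ x \in S, y \in S, e x y & f = [set x; y]])
          (is_edge e S f).
Proof.
apply: (iffP existsP) => [[x /existsP [y /and4P [xS yS exy /eqP ->]]]|].
  by exists x, y.
by case=> x [y [xS yS exy ->]]; exists x; apply/existsP; exists y; rewrite xS yS exy eqxx.
Qed.

Lemma is_edge_sub (S : {set T}) f :
  is_edge e S f = is_edge e [set: T] f && (f \subset S).
Proof.
apply/is_edgeP/andP => [[x [y [xS yS exy ->]]]|[/is_edgeP [x [y [_ _ exy ->]]] fS]].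
  by split; [apply/is_edgeP; exists x, y; rewrite !inE | rewrite subUset !sub1set xS yS].
by move: fS; rewrite subUset !sub1set => /andP [xS yS]; exists x, y.
Qed.

Definition gmatching M := is_matching e [set: T] M.

Lemma matchingE (S : {set T}) M :
  is_matching e S M = gmatching M && (cover M \subset S).
Proof.
rewrite /is_matching andbAC; congr (_ && _).
apply/forall_inP/andP => [edgeS|[/forall_inP edgeT /bigcupsP sub] f fM].
  split; first by apply/forall_inP => f /edgeS; rewrite is_edge_sub => /andP[].
  by apply/bigcupsP => f /edgeS; rewrite is_edge_sub => /andP[].
by rewrite is_edge_sub edgeT ?sub.
Qed.

Lemma matching_disjoint M : gmatching M ->
  {in M &, forall f g : {set T}, f != g -> [disjoint f & g]}.
Proof.
rewrite /gmatching; case/andP => _ /forall_inP disj f g fM gM.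
by move/forall_inP: (disj f fM) => /(_ g gM) /implyP.
Qed.

Lemma matching_edge M f : gmatching M -> f \in M ->
  exists x y, [/\ e x y, x != y & f = [set x; y]].
Proof.
rewrite /gmatching; case/andP => /forall_inP edges _.
move=> /edges /is_edgeP [x [y [_ _ exy ->]]].
by exists x, y; split=> //; apply: contraTneq exy => ->; rewrite e_irr.
Qed.

Lemma card_cover M : gmatching M -> #|cover M| = 2 * #|M|.
Proof.
move=> MM; have /eqP <- : trivIset M by apply/trivIsetP; apply: matching_disjoint.
rewrite mulnC -sum_nat_const; apply: eq_bigr => f fM.
by have [x [y [_ xy ->]]] := matching_edge MM fM; rewrite cards2 xy.
Qed.

Lemma matching_card_le (S : {set T}) M : is_matching e S M -> 2 * #|M| <= #|S|.
Proof. by rewrite matchingE => /andP [MM sub]; rewrite -card_cover ?subset_leq_card. Qed.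

Lemma matching_subset M (M' : {set {set T}}) :
  gmatching M -> M' \subset M -> gmatching M'.
Proof.
rewrite /gmatching; case/andP => /forall_inP edges /forall_inP disj /subsetP sub.
apply/andP; split.
  by apply/forall_inP => f /sub /edges.
apply/forall_inP => f /sub fM; apply/forall_inP => g /sub gM.
by move/forall_inP: (disj f fM) => /(_ g gM).
Qed.

Lemma matching_add M f : gmatching M -> is_edge e [set: T] f ->
  [disjoint f & cover M] -> gmatching (f |: M).
Proof.
rewrite /gmatching => MM fe dis; have [/forall_inP edges _] := andP MM.
have disf g : g \in M -> [disjoint f & g].
  by move=> gM; apply: disjointWr dis; apply: bigcup_sup.
apply/andP; split.
  by apply/forall_inP => g; rewrite !inE => /predU1P [-> //|/edges].
apply/forall_inP => g /setU1P gin; apply/forall_inP => h /setU1P hin; apply/implyP.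
case: gin => [->|gM]; case: hin => [->|hM].
- by rewrite eqxx.
- by move=> _; apply: disf.
- by move=> _; rewrite disjoint_sym disf.
- exact: (matching_disjoint MM gM hM).
Qed.

End Matchings.

Section MatchingPolynomial.
Variables (T : finType) (e : rel T).
Hypotheses (e_sym : symmetric e) (e_irr : irreflexive e).
Variable R : nzRingType.
Local Open Scope ring_scope.
Local Notation mu S := (matchpoly R e S).

Definition mterm (S : {set T}) (M : {set {set T}}) : {poly R} :=
  (-1) ^+ #|M| *: 'X^(#|S| - 2 * #|M|).

Lemma matchpolyE (S : {set T}) : mu S = \sum_(M | is_matching e S M) mterm S M.
Proof.
rewrite /matchpoly; transitivity (\sum_(r < (#|S| %/ 2).+1)
    \sum_(M | is_matching e S M && (#|M| == r)) mterm S M).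
  apply: eq_bigr => r _; rewrite /nmatch.
  have -> : #|[set M | is_matching e S M & #|M| == r]| =
             (\sum_(M | is_matching e S M && (#|M| == r)) 1)%N.
    by rewrite -sum1_card; apply: eq_bigl => M; rewrite inE.
  rewrite natr_sum mulr_sumr scaler_suml.
  by apply: eq_bigr => M /andP [_ /eqP <-]; rewrite mulr1.
rewrite (exchange_big_dep (fun M => is_matching e S M)) /=; last by move=> r M _ /andP[].
apply: eq_bigr => M MS.
have ltM : (#|M| < (#|S| %/ 2).+1)%N.
  by rewrite ltnS leq_divRL // mulnC (matching_card_le e_irr MS).
rewrite (big_pred1 (Ordinal ltM)) // => r /=.
by rewrite MS; apply/eqP/eqP => [rM|-> //]; apply: val_inj.
Qed.

Lemma nmatch0 (S : {set T}) : nmatch e S 0 = 1%N.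
Proof.
rewrite /nmatch (_ : [set M | _ & _] = [set set0]) ?cards1 //.
apply/setP => M; rewrite !inE cards_eq0 andbC.
case: (eqVneq M set0) => [->|_] //=.
rewrite matchingE /cover big_set0 sub0set andbT.
by apply/andP; split; apply/forall_inP => f; rewrite inE.
Qed.

Section DeleteEdge.
Variables (S : {set T}) (v w : T).
Hypotheses (vS : v \in S) (wSv : w \in S :\ v) (e_vw : e v w).
Local Notation f := [set v; w].

Lemma matching_remove_edge M :
  is_matching e S M -> f \in M -> is_matching e (S :\ v :\ w) (M :\ f).
Proof.
rewrite !matchingE => /andP [MM sub] fM; rewrite (matching_subset MM) ?subD1set //=.
apply/bigcupsP => g /setD1P [gf gM]; apply/subsetP => x xg.
have xS : x \in S by apply: (subsetP sub); apply/bigcupP; exists g.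
have /disjointFr/(_ xg) := matching_disjoint MM gM fM gf.
by rewrite !inE xS => /norP [-> ->].
Qed.

Lemma matching_add_edge M' : is_matching e (S :\ v :\ w) M' ->
  f \notin M' /\ is_matching e S (f |: M').
Proof.
rewrite matchingE => /andP [MM sub].
have fM' : f \notin M'.
  apply/negP => fM; have : v \in cover M' by apply/bigcupP; exists f; rewrite ?inE ?eqxx.
  by move/(subsetP sub); rewrite !inE eqxx andbF.
have vwM : [disjoint f & cover M'].
  rewrite disjoints_subset subUset !sub1set !in_setC.
  by apply/andP; split; apply/negP => /(subsetP sub); rewrite !inE eqxx ?andbF.
have wS : w \in S by case/setD1P: wSv.
split=> //; rewrite matchingE /cover big_setU1 //=.
rewrite matching_add //; last by apply/is_edgeP; exists v, w; rewrite !inE.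
rewrite subUset subUset !sub1set vS wS /=.
by apply: (subset_trans sub); apply/subsetP => x; rewrite !inE => /and3P [].
Qed.

Lemma mterm_add_edge M' : is_matching e (S :\ v :\ w) M' ->
  mterm S (f |: M') = - mterm (S :\ v :\ w) M'.
Proof.
move=> M'S; have [fM' _] := matching_add_edge M'S.
have le := matching_card_le e_irr M'S.
rewrite /mterm cardsU1 fM' (cardsD1 v S) vS (cardsD1 w (S :\ v)) wSv !add1n.
by rewrite exprS mulN1r scaleNr mulnS -addn2 addnC subnDl.
Qed.

Lemma sum_matchings_through :
  \sum_(M | is_matching e S M && (f \in M)) mterm S M = - mu (S :\ v :\ w).
Proof.
rewrite matchpolyE -sumrN (reindex_onto (fun M' => f |: M') (fun M => M :\ f)) /=.
  have predE M' : (is_matching e S (f |: M') && (f \in f |: M'))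
                    && ((f |: M') :\ f == M') = is_matching e (S :\ v :\ w) M'.
    rewrite setU11 andbT; apply/andP/idP => [[MS /eqP <-]|M'S].
      by apply: matching_remove_edge; rewrite ?setU11.
    by have [fM' ->] := matching_add_edge M'S; rewrite setU1K.
  by apply: eq_big => M'; rewrite predE //; apply: mterm_add_edge.
by move=> M /andP [_ fM]; apply: setD1K.
Qed.

End DeleteEdge.

Lemma matching_partner (S : {set T}) v M : is_matching e S M -> v \in cover M ->
  exists w, [/\ w \in S :\ v, e v w, [set v; w] \in M
              & forall w', w' != v -> [set v; w'] \in M -> w' = w].
Proof.
rewrite matchingE => /andP [MM sub] /bigcupP [g gM vg].
have [w [gE evw wv]] : exists w, [/\ g = [set v; w], e v w & w != v].
  have [x [y [exy xy gE]]] := matching_edge e_irr MM gM.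
  move: vg; rewrite gE !inE => /orP [/eqP vx|/eqP vy]; subst.
    by exists y; rewrite eq_sym.
  by exists x; rewrite setUC e_sym.
have wS : w \in S.
  by apply: (subsetP sub); apply/bigcupP; exists g; rewrite // gE !inE eqxx orbT.
exists w; split; rewrite -?gE ?inE ?wv //.
move=> w' w'v w'M; have : w' \in g.
  case: (eqVneq [set v; w'] g) => [<-|neq]; first by rewrite !inE eqxx orbT.
  have /disjointFr := matching_disjoint MM w'M gM neq.
  by move=> /(_ v); rewrite vg !inE eqxx => /(_ isT).
by rewrite gE !inE (negbTE w'v) => /eqP.
Qed.

Lemma sum_matchings_covering (S : {set T}) v : v \in S ->
  \sum_(M | is_matching e S M && (v \in cover M)) mterm S M
    = - \sum_(w in S :\ v | e v w) mu (S :\ v :\ w).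
Proof.
move=> vS; transitivity (\sum_(M | is_matching e S M && (v \in cover M))
    \sum_(w in S :\ v | e v w && ([set v; w] \in M)) mterm S M).
  apply: eq_bigr => M /andP [MS vM]; have [w [wS evw fM wU]] := matching_partner MS vM.
  rewrite (big_pred1 w) // => w' /=; apply/idP/eqP => [|->]; last by rewrite wS evw.
  by case/and3P => /setD1P [w'v _] _; apply: wU.
rewrite (exchange_big_dep (fun w => (w \in S :\ v) && e v w)) /=; last first.
  by move=> M w _ /and3P [-> ->].
rewrite -sumrN; apply: eq_bigr => w /andP [wS evw].
rewrite -sum_matchings_through //; apply: eq_bigl => M.
rewrite wS evw; case fM: ([set v; w] \in M); rewrite ?andbF ?andbT //.
rewrite (_ : v \in cover M) ?andbT //.
by apply/bigcupP; exists [set v; w]; rewrite ?inE ?eqxx.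
Qed.

Lemma matchpoly_rec (S : {set T}) v : v \in S ->
  mu S = 'X * mu (S :\ v) - \sum_(w in S :\ v | e v w) mu (S :\ v :\ w).
Proof.
move=> vS; rewrite -sum_matchings_covering // {1}matchpolyE.
rewrite (bigID (fun M => v \in cover M)) /= addrC; congr (_ + _).
rewrite matchpolyE mulr_sumr; apply: eq_big => M.
  by rewrite !matchingE subsetD1 andbA.
move=> /andP [MS vM].
have MSv : is_matching e (S :\ v) M by rewrite matchingE subsetD1 andbA -matchingE MS.
rewrite /mterm (cardsD1 v S) vS add1n subSn ?(matching_card_le e_irr MSv) //.
by rewrite exprSr scalerAl -(commr_polyX) -scalerAl.
Qed.

Lemma deriv_mterm (S : {set T}) M : is_matching e S M ->
  (mterm S M)^`() = \sum_(v in S :\: cover M) mterm (S :\ v) M.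
Proof.
move=> MS; have /andP [MM sub] : gmatching e M && (cover M \subset S) by rewrite -matchingE.
have termE v : v \in S :\: cover M ->
    mterm (S :\ v) M = (-1) ^+ #|M| *: 'X^((#|S| - 2 * #|M|).-1).
  by case/setDP => vS _; rewrite /mterm (cardsD1 v S) vS add1n subSKn.
rewrite (eq_bigr _ termE) sumr_const cardsD (setIidPr sub) (card_cover e_irr MM).
by rewrite /mterm derivZ derivXn scalerMnr.
Qed.

Lemma matchpoly_deriv (S : {set T}) : (mu S)^`() = \sum_(v in S) mu (S :\ v).
Proof.
rewrite matchpolyE raddf_sum (eq_bigr _ (@deriv_mterm S)).
rewrite (exchange_big_dep (fun v => v \in S)) /=; last by move=> M v _; case/setDP.
apply: eq_bigr => v vS; rewrite matchpolyE; apply: eq_bigl => M.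
by rewrite [in RHS]matchingE subsetD1 andbA -matchingE !inE vS andbT.
Qed.

Lemma size_matchpoly (S : {set T}) : size (mu S) = #|S|.+1.
Proof.
have [n] := ubnP #|S|; elim: n S => // n IH S ltS.
have [->|[v vS]] := set_0Vmem S.
  rewrite /matchpoly cards0 big_ord1 nmatch0 expr0 mul1r scale1r.
  by rewrite size_polyC oner_neq0.
have cardSv : #|S| = #|S :\ v|.+1 by rewrite (cardsD1 v S) vS.
have sizeSv : size (mu (S :\ v)) = #|S| by rewrite IH // -ltnS -cardSv.
have sizeX : size ('X * mu (S :\ v)) = #|S|.+1.
  by rewrite -commr_polyX size_mulX -?size_poly_gt0 sizeSv // cardSv.
have sizeSum : (size (\sum_(w in S :\ v | e v w) mu (S :\ v :\ w))%R <= #|S :\ v|)%N.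
  apply: (big_ind (fun p : {poly R} => (size p <= #|S :\ v|)%N)) => [|p q|w /andP [wS _]].
  - by rewrite size_poly0.
  - by move=> sp sq; rewrite (leq_trans (size_polyD _ _)) // geq_max sp sq.
  - rewrite IH; first by rewrite (cardsD1 w (S :\ v)) wS.
    by rewrite -ltnS (leq_trans _ ltS) // cardSv ltnS (cardsD1 w (S :\ v)) wS.
rewrite (matchpoly_rec vS) size_polyDl sizeX // size_polyN.
by rewrite cardSv ltnS (leq_trans sizeSum).
Qed.

(* Matching polynomials never vanish, so their root multiplicities are meaningful. *)
Lemma matchpoly_neq0 (S : {set T}) : mu S != 0.
Proof. by rewrite -size_poly_gt0 size_matchpoly. Qed.

End MatchingPolynomial.

Section RootMultiplicity.
Variables (R : fieldType) (th : R).
Local Open Scope ring_scope.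
Local Notation L := ('X - th%:P).

Lemma dvdp_mup p : L ^+ mup th p %| p.
Proof. by have [->|p0] := eqVneq p 0; [apply: dvdp0 | rewrite -mup_geq]. Qed.

Lemma dvdp_deriv_mup p : L ^+ (mup th p).-1 %| p^`().
Proof.
case mE: (mup th p) => [|m] /=; first by rewrite expr0 dvd1p.
have /dvdpP [r ->] : L ^+ m.+1 %| p by rewrite -mE dvdp_mup.
rewrite derivM deriv_exp derivXsubC mul1r /=.
apply: dvdp_add; first by apply: dvdp_mull; rewrite exprS dvdp_mulIr.
by apply: dvdp_mull; rewrite -mulr_natr dvdp_mulr.
Qed.

Lemma mup_sub_dvd p q : q != 0 -> L ^+ (mup th q).+1 %| p ->
  p - q != 0 /\ mup th (p - q) = mup th q.
Proof.
move=> q0 dp; have qnd : ~~ (L ^+ (mup th q).+1 %| q) by rewrite -mup_leq.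
have pq0 : p - q != 0.
  by rewrite subr_eq0; apply: (contraNneq _ qnd) => pq; rewrite -[in X in _ %| X]pq.
split=> //; apply/eqP; rewrite eqn_leq mup_leq // mup_geq //; apply/andP; split.
  by apply: (contra _ qnd) => dpq; rewrite -[in X in _ %| X](subKr p q) dvdp_sub.
by rewrite dvdp_sub ?dvdp_mup // (dvdp_trans _ dp) // dvdp_exp2l.
Qed.

End RootMultiplicity.

(* Sums of squares of polynomials over a real field vanish to even order. *)
Section SumsOfSquares.
Variables (R : realFieldType) (th : R).
Local Open Scope ring_scope.
Local Notation L := ('X - th%:P).

Definition sos (p : {poly R}) := exists s : seq {poly R}, p = \sum_(q <- s) q ^+ 2.

Lemma sos_sq q : sos (q ^+ 2).
Proof. by exists [:: q]; rewrite big_seq1. Qed.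

Lemma sos_add p q : sos p -> sos q -> sos (p + q).
Proof. by case=> s -> [t ->]; exists (s ++ t); rewrite big_cat. Qed.

Lemma sos_sum (I : finType) (P : pred I) (F : I -> {poly R}) :
  (forall i, P i -> sos (F i)) -> sos (\sum_(i | P i) F i).
Proof.
by move=> sosF; apply: big_ind => //; [exists [::]; rewrite big_nil | apply: sos_add].
Qed.

(* p = (x - th)^(2d) h with h(th) > 0: p vanishes to the even order 2d at th
   and is positive on both sides of th. *)
Definition evenpos_order (p : {poly R}) (d : nat) :=
  exists h, p = L ^+ (2 * d) * h /\ 0 < h.[th].

Lemma evenpos_order_mup p d : evenpos_order p d -> p != 0 /\ mup th p = (2 * d)%N.
Proof.
case=> h [-> hpos]; have hroot : ~~ root h th by rewrite /root gt_eqF.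
split; last by rewrite mupMl // mup_XsubCX eqxx.
rewrite mulf_neq0 ?expf_neq0 ?polyXsubC_eq0 //.
by apply: contraNneq hroot => ->; rewrite root0.
Qed.

Lemma evenpos_order_sq q : q != 0 -> evenpos_order (q ^+ 2) (mup th q).
Proof.
move=> q0; have [m [g]] := multiplicity_XsubC q th; rewrite q0 /= => groot qE.
have -> : mup th q = m by rewrite qE mupMr // mup_XsubCX eqxx.
exists (g ^+ 2); split; last by rewrite horner_exp exprn_even_gt0.
by rewrite qE exprMn mulrC -exprM mulnC.
Qed.

(* In a sum of such polynomials the lowest order survives: no cancellation. *)
Lemma evenpos_order_add p r d1 d2 : evenpos_order p d1 -> evenpos_order r d2 ->
  evenpos_order (p + r) (minn d1 d2).
Proof.
move=> [h1 [-> h1pos]] [h2 [-> h2pos]].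
wlog le12 : d1 d2 h1 h2 h1pos h2pos / (d1 <= d2)%N.
  move=> sym; case/orP: (leq_total d1 d2) => le; first exact: sym.
  by rewrite addrC minnC; apply: sym.
exists (h1 + L ^+ (2 * (d2 - d1)) * h2); rewrite (minn_idPl le12); split.
  by rewrite mulrDr mulrA -exprD -mulnDr subnKC.
rewrite hornerD hornerM horner_exp hornerXsubC subrr ltr_wpDr //.
by apply: mulr_ge0; [rewrite expr0n; case: eqP | apply: ltW].
Qed.

Lemma sos_evenpos p : sos p -> p = 0 \/ exists d, evenpos_order p d.
Proof.
case=> s ->; elim: s => [|q s IH]; first by left; rewrite big_nil.
rewrite big_cons; have [->|q0] := eqVneq q 0; first by rewrite expr0n /= add0r.
right; case: IH => [->|[d pd]].
  by rewrite addr0; exists (mup th q); apply: evenpos_order_sq.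
by exists (minn (mup th q) d); apply: evenpos_order_add => //; apply: evenpos_order_sq.
Qed.

Lemma sos_mup_even p : sos p -> p != 0 -> ~~ odd (mup th p).
Proof.
case/sos_evenpos => [-> /eqP //|[d /evenpos_order_mup [_ ->]] _].
by rewrite mul2n odd_double.
Qed.

Lemma sos_sq_mup q p : sos p -> q != 0 ->
  q ^+ 2 + p != 0 /\ (mup th (q ^+ 2 + p) <= 2 * mup th q)%N.
Proof.
move=> sosp q0; have qd := evenpos_order_sq q0.
case: (sos_evenpos sosp) => [->|[d pd]].
  by rewrite addr0; have [-> ->] := evenpos_order_mup qd.
have [-> ->] := evenpos_order_mup (evenpos_order_add qd pd).
by rewrite leq_mul2l geq_minl orbT.
Qed.

Lemma mup_wronskian (f g s : {poly R}) :
  sos s -> g != 0 -> g * f^`() - f * g^`() = g ^+ 2 + s ->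
  (mup th f <= (mup th g).+1)%N.
Proof.
move=> sos_s g0 W; have [W0 Wle] := sos_sq_mup sos_s g0; rewrite -W in W0 Wle.
rewrite leqNgt; apply/negP => ltgf.
suff : L ^+ (2 * mup th g).+1 %| g * f^`() - f * g^`().
  by rewrite -mup_geq // => /leq_trans/(_ Wle); rewrite ltnn.
apply: dvdp_sub.
  apply: dvdp_trans (dvdp_mul (dvdp_mup th g) (dvdp_deriv_mup th f)).
  by rewrite -exprD dvdp_exp2l //; lia.
apply: dvdp_trans (dvdp_mul (dvdp_mup th f) (dvdp_deriv_mup th g)).
by rewrite -exprD dvdp_exp2l //; lia.
Qed.

End SumsOfSquares.

Lemma setD1C (T : finType) (A : {set T}) x y : A :\ x :\ y = A :\ y :\ x.
Proof. by apply/setP => z; rewrite !inE andbCA. Qed.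

(* Godsil's sum-of-squares identity and its consequences for mult. *)
Section Interlacing.
Variables (T : finType) (e : rel T).
Hypotheses (e_sym : symmetric e) (e_irr : irreflexive e).
Variables (R : realFieldType) (th : R).
Local Open Scope ring_scope.
Local Notation mu S := (matchpoly R e S).
Local Notation mlt S := (mult e th S).
Local Notation L := ('X - th%:P).

(* Expanding both sides at v leaves, besides a square, the
   same expression for S - v and the pairs (w, u), w ~ v: induction on |S|. *)
Lemma matchpoly_sos (S : {set T}) u v : u \in S -> v \in S -> u != v ->
  sos (mu (S :\ u) * mu (S :\ v) - mu S * mu (S :\ u :\ v)).
Proof.
have [n] := ubnP #|S|; elim: n S u v => // n IH S u v ltS uS vS uv.
have vSu : v \in S :\ u by rewrite !inE eq_sym uv vS.
rewrite (matchpoly_rec e_sym e_irr R vS) (matchpoly_rec e_sym e_irr R vSu).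
set A := mu (S :\ u :\ v); set B := mu (S :\ v).
have -> : forall a b p q : {poly R}, ('X * a - p) * b - ('X * b - q) * a = q * a - p * b.
  by move=> a b p q; rewrite !mulrBl mulrAC opprB addrC addrA subrK.
rewrite !mulr_suml (bigID (pred1 u)) /= -addrA; apply: sos_add.
  by apply: sos_sum => w /andP [_ /eqP ->]; rewrite /A setD1C -expr2; apply: sos_sq.
rewrite (eq_bigl (fun w => (w \in S :\ u :\ v) && e v w)) => [|w]; last first.
  by rewrite !inE; case: (w =P u); case: (w =P v); rewrite ?andbF ?andbT.
rewrite -sumrB; apply: sos_sum => w /andP [wS _].
have ltSv : (#|S :\ v| < n)%N by rewrite -ltnS (leq_trans _ ltS) // ltnS (cardsD1 v S) vS.
have uSv : u \in S :\ v by rewrite !inE uv uS.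
have wu : w != u by move: wS; rewrite !inE => /and3P [_ ->].
have wSv : w \in S :\ v by move: wS; rewrite !inE => /and3P [-> _ ->].
have -> : S :\ u :\ v :\ w = S :\ v :\ w :\ u by rewrite (setD1C S) setD1C.
by rewrite /A (setD1C S u v) [_ * B]mulrC; apply: IH.
Qed.

Lemma matchpoly_wronskian (S : {set T}) u : u \in S ->
  mu (S :\ u) * (mu S)^`() - mu S * (mu (S :\ u))^`()
    = mu (S :\ u) ^+ 2
      + \sum_(v in S :\ u) (mu (S :\ u) * mu (S :\ v) - mu S * mu (S :\ u :\ v)).
Proof.
move=> uS; rewrite !(matchpoly_deriv e_irr) (bigD1 u) //= mulrDr expr2 -addrA.
congr (_ + _); rewrite sumrB !mulr_sumr; congr (_ - _).
by apply: eq_bigl => v; rewrite !inE andbC.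
Qed.

Lemma mult_le_delete (S : {set T}) u : u \in S -> (mlt S <= (mlt (S :\ u)).+1)%N.
Proof.
move=> uS; apply: mup_wronskian (matchpoly_neq0 e_sym e_irr R _) (matchpoly_wronskian uS).
apply: sos_sum => v /setD1P [vu vS]; apply: matchpoly_sos => //; by rewrite eq_sym.
Qed.

Lemma mult_delete_le (S : {set T}) u : u \in S -> (mlt (S :\ u) <= (mlt S).+1)%N.
Proof.
move=> uS; have : L ^+ (mlt (S :\ u)).-1 %| mu S.
  rewrite (matchpoly_rec e_sym e_irr R uS); apply: dvdp_sub.
    by rewrite dvdp_mull // (dvdp_trans _ (dvdp_mup th _)) // dvdp_exp2l ?leq_pred.
  apply: (big_ind (fun p => L ^+ (mlt (S :\ u)).-1 %| p)) => [|p q|w /andP [wS _]].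
  - exact: dvdp0.
  - exact: dvdp_add.
  - rewrite (dvdp_trans _ (dvdp_mup th _)) // dvdp_exp2l //.
    by rewrite -subn1 leq_subLR add1n mult_le_delete.
by rewrite -mup_geq ?matchpoly_neq0 // -subn1 leq_subLR add1n.
Qed.

(* Two distinct th-positive vertices of G[S] cannot be deleted together at the
   cost of exactly one: otherwise Godsil's sum of squares would vanish to odd order. *)
Lemma positive_pair_mult (S : {set T}) u v : u \in S -> v \in S -> u != v ->
  mlt (S :\ u) = (mlt S).+1 -> mlt (S :\ v) = (mlt S).+1 ->
  mlt (S :\ u :\ v) != (mlt S).+1.
Proof.
move=> uS vS uv; rewrite /mult => mult_u mult_v; apply/eqP => mult_uv.
have nz := matchpoly_neq0 e_sym e_irr R.
set m := mup th (mu S) in mult_u mult_v mult_uv.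
have mult_prod : mup th (mu S * mu (S :\ u :\ v)) = (m + m.+1)%N.
  by rewrite mupM ?nz // mult_uv.
have dvd_prod : L ^+ (mup th (mu S * mu (S :\ u :\ v))).+1 %| mu (S :\ u) * mu (S :\ v).
  by rewrite mult_prod -addSn exprD -{1}mult_u -mult_v dvdp_mul // dvdp_mup.
have [D0 multD] := mup_sub_dvd (mulf_neq0 (nz S) (nz (S :\ u :\ v))) dvd_prod.
have := sos_mup_even th (matchpoly_sos uS vS uv) D0.
by rewrite multD mult_prod addnS addnn /= odd_double.
Qed.

End Interlacing.

Definition exact_or_gap (m k : nat) := m = k \/ (m + 2 <= k)%N.

(* With c, cu, cv, cuv the multiplicities after deleting
   A, A + u, A + v, A + u + v, the dichotomy for the first three gives it for the
   last, using interlacing and the impossibility of the pattern c, c+1, c+1, c+1. *)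
Lemma exact_or_gap_step N c cu cv cuv :
  exact_or_gap c N -> exact_or_gap cu N.+1 -> exact_or_gap cv N.+1 ->
  (cu <= c.+1)%N -> (cuv <= cu.+1)%N -> (cuv <= cv.+1)%N ->
  (cu = c.+1 -> cv = c.+1 -> cuv <> c.+1) -> exact_or_gap cuv N.+2.
Proof. rewrite /exact_or_gap; lia. Qed.

Lemma setCU1 (T : finType) (x : T) (A : {set T}) : ~: (x |: A) = ~: A :\ x.
Proof. by apply/setP => z; rewrite !inE negb_or andbC. Qed.

Lemma set_ind2 (T : finType) (P : {set T} -> Prop) :
  P set0 -> (forall x, P [set x]) ->
  (forall x y (A : {set T}), x != y -> x \notin A -> y \notin A ->
     P A -> P (x |: A) -> P (y |: A) -> P (x |: (y |: A))) ->
  forall A, P A.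
Proof.
move=> P0 P1 P2 A; have [n] := ubnP #|A|; elim: n A => // n IH A ltA.
have [->|[x xA]] := set_0Vmem A; first exact: P0.
have [Ax0|[y yAx]] := set_0Vmem (A :\ x); first by rewrite -(setD1K xA) Ax0 setU0.
have [yx yA] := setD1P yAx; set B := A :\ x :\ y.
have xB : x \notin B by rewrite !inE eqxx andbF.
have yB : y \notin B by rewrite !inE eqxx.
have cardA : #|A| = #|B|.+2 by rewrite (cardsD1 x A) xA (cardsD1 y (A :\ x)) yAx.
rewrite -(setD1K xA) -(setD1K yAx) -/B; apply: P2; rewrite 1?eq_sym //.
all: by apply: IH; rewrite ?cardsU1 ?(negbTE xB) ?(negbTE yB); lia.
Qed.

Section DeletingPositiveVertices.
Variables (T : finType) (e : rel T).
Hypotheses (e_sym : symmetric e) (e_irr : irreflexive e).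
Variables (R : realFieldType) (th : R).
Local Notation mlt S := (mult e th S).

Lemma mult_delete_positive (U : {set T}) :
  (forall u, u \in U -> theta_positive e th [set: T] u) ->
  forall W : {set T}, W \subset U -> exact_or_gap (mlt (~: W)) (mlt [set: T] + #|W|).
Proof.
move=> pos; apply: set_ind2 => [_|x|x y A xy xA yA IHA IHx IHy].
- by left; rewrite setC0 cards0 addn0.
- rewrite sub1set cards1 addn1 => /pos /eqP <-; left.
  by congr mult; apply/setP => z; rewrite !inE andbT.
rewrite !subUset !sub1set => /and3P [xU yU AU].
set H := ~: A; have xH : x \in H by rewrite inE.
have yH : y \in H by rewrite inE.
have xHy : x \in H :\ y by rewrite !inE xy.
have yHx : y \in H :\ x by rewrite !inE eq_sym xy.
have cardA z : z \notin A -> #|z |: A| = #|A|.+1 by move=> zA; rewrite cardsU1 zA.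
have cardxyA : #|x |: (y |: A)| = #|A|.+2 by rewrite cardsU1 cardA // !inE negb_or xy xA.
have gap_x : exact_or_gap (mlt (H :\ x)) (mlt [set: T] + #|A|).+1.
  by rewrite -setCU1 -addnS -(cardA _ xA); apply: IHx; rewrite subUset sub1set xU.
have gap_y : exact_or_gap (mlt (H :\ y)) (mlt [set: T] + #|A|).+1.
  by rewrite -setCU1 -addnS -(cardA _ yA); apply: IHy; rewrite subUset sub1set yU.
rewrite setCU1 setCU1 cardxyA !addnS; apply: (exact_or_gap_step (IHA AU) gap_x gap_y).
- exact: mult_delete_le.
- by rewrite setD1C; apply: mult_delete_le.
- exact: mult_delete_le.
- move=> mult_x mult_y; apply/eqP; rewrite setD1C.
  exact: positive_pair_mult.
Qed.

End DeletingPositiveVertices.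

Theorem lemma3p12 (T : finType) (e : rel T) (e_sym : symmetric e)
  (e_irr : irreflexive e) (R : rcfType) (theta : R) (U : {set T}) :
  (forall u, u \in U -> theta_positive e theta [set: T] u) ->
  mult e theta (~: U) = (mult e theta [set: T] + #|U|)%N \/
  (mult e theta (~: U) + 2 <= mult e theta [set: T] + #|U|)%N.
Proof. by move=> pos; apply: (mult_delete_positive e_sym e_irr pos (subxx U)). Qed.
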